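(* Let $\alpha>0$ be an ordinal, let $X$ be a topological space, let $Y$ be a regular-$U(\alpha)$-space, let $S$ be a dense subset of $X$ and let $f:S\to Y$ be continuous. Then the following are equivalent: (1) $f$ has a continuous extension to $X$; (2) for every family $\{A_\beta\}$ of closed subsets of $Y$ with $\bigcap_\beta A_\beta=\emptyset$ one has $\bigcap_\beta\overline{f^{-1}(A_\beta)}=\emptyset$ (closures in $X$).
   Context: For a subset $A$ of a space $Z$ and an ordinal $\alpha>0$, an $\alpha$-hull of $A$ is an open set $U\supseteq A$ for which there exists a family $\{U_\beta\}_{\beta\le\alpha}$ of open sets containing $A$ with $\mathrm{cl}\,U_\beta\subseteq U_{\beta+1}$ whenever $\beta+1\le\alpha$ and $U=U_\alpha=\bigcup_{\beta\le\alpha}U_\beta$. $Z$ is a regular-$U(\alpha)$-space if for every point $x$ and closed set $F$ with $x\notin F$ there are an $\alpha$-hull $U_x$ of $x$ and an $\alpha$-hull $U_F$ of $F$ with $\overline{U_x}\cap\overline{U_F}=\emptyset$. *)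

From HB Require Import structures.
From mathcomp Require Import all_boot all_order.
From mathcomp Require Import all_classical.
From mathcomp Require Import topology.
Set Implicit Arguments. Unset Strict Implicit. Unset Printing Implicit Defensive.
Local Open Scope classical_set_scope.

(* An ordinal alpha > 0 is represented by the well-ordered set [0, alpha] of
   ordinals beta <= alpha: a type with a strict, total, well-founded order
   having a greatest element [ord_top] (= alpha) which is not the least
   element (alpha > 0). Every such well-ordered set is order-isomorphic to
   [0, alpha] for a unique ordinal alpha, and conversely. *)
Record pos_ordinal := PosOrdinal {
  ord_car :> Type;
  ord_lt : ord_car -> ord_car -> Prop;
  ord_lt_irrefl : forall b, ~ ord_lt b b;
  ord_lt_trans : forall a b c, ord_lt a b -> ord_lt b c -> ord_lt a c;
  ord_lt_total : forall a b, ord_lt a b \/ a = b \/ ord_lt b a;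
  ord_lt_wf : well_founded ord_lt;
  ord_top : ord_car;
  ord_top_max : forall b, b = ord_top \/ ord_lt b ord_top;
  ord_pos : exists b, ord_lt b ord_top
}.

Definition ord_succ (W : pos_ordinal) (b c : W) : Prop :=
  @ord_lt W b c /\ forall d, @ord_lt W b d -> d = c \/ @ord_lt W c d.

(* U is an alpha-hull of A. The condition "cl U_beta ⊆ U_(beta+1) whenever
   beta + 1 <= alpha" is: for all beta, c in [0,alpha] with c = beta + 1. *)
Definition alpha_hull (W : pos_ordinal) (Z : topologicalType) (A U : set Z) : Prop :=
  open U /\ A `<=` U /\
  exists Ub : W -> set Z,
    (forall b, open (Ub b) /\ A `<=` Ub b) /\
    (forall b c, ord_succ b c -> closure (Ub b) `<=` Ub c) /\
    U = Ub (ord_top W) /\ U = \bigcup_(b in [set: W]) Ub b.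

Definition regular_U (W : pos_ordinal) (Z : topologicalType) : Prop :=
  forall (x : Z) (F : set Z), closed F -> ~ F x ->
    exists Ux UF, alpha_hull W [set x] Ux /\ alpha_hull W F UF /\
      closure Ux `&` closure UF = set0.

From mathcomp Require Import all_boot all_order all_classical topology.
Set Implicit Arguments. Unset Strict Implicit. Unset Printing Implicit Defensive.
Local Open Scope classical_set_scope.

(* If g extends f continuously, then closure (S `&` f @^-1` A) lies in the
   closed set g @^-1` A, so a point in every such closure would be mapped by g
   into the empty intersection of the A_i. *)

Definition closure_regular (Z : topologicalType) : Prop :=
  forall (y : Z) (F : set Z), closed F -> ~ F y ->
  exists U V, [/\ open U, U y, open V, F `<=` V & closure U `&` closure V = set0].

Lemma regular_U_closure_regular (W : pos_ordinal) (Z : topologicalType) :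
  regular_U W Z -> closure_regular Z.
Proof.
move=> RU y F cF nFy.
have [U [V [[oU [yU _]] [[oV [FV _]] UV0]]]] := RU y F cF nFy.
by exists U, V; split=> //; exact: yU.
Qed.

Lemma dense_closure (X : topologicalType) (S : set X) (x : X) :
  dense S -> closure S x.
Proof.
move=> dS B /nbhs_interior nB.
have [s [Bs Ss]] := dS _ (ex_intro _ x (nbhs_singleton nB)) (@open_interior _ B).
by exists s; split=> //; exact: interior_subset.
Qed.

Lemma closure_preimage_extension (X Y : topologicalType) (S : set X)
    (f g : X -> Y) (A : set Y) :
  continuous g -> (forall x, S x -> g x = f x) -> closed A ->
  closure (S `&` f @^-1` A) `<=` g @^-1` A.
Proof.
move=> cg gf cA; have /closure_id -> : closed (g @^-1` A).
  exact: (continuous_closedP g).1.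
apply: closureS => x [Sx Afx].
by rewrite /preimage /= gf.
Qed.

Lemma extension_bigcap_closure_preimage0 (X Y : topologicalType) (S : set X)
    (f g : X -> Y) (I : Type) (A : I -> set Y) :
  continuous g -> (forall x, S x -> g x = f x) -> (forall i, closed (A i)) ->
  \bigcap_(i in [set: I]) A i = set0 ->
  \bigcap_(i in [set: I]) closure (S `&` f @^-1` A i) = set0.
Proof.
move=> cg gf cA A0; apply/seteqP; split=> // x clx.
have : (\bigcap_(i in [set: I]) A i) (g x); last by rewrite A0.
by move=> i _; apply: (closure_preimage_extension cg gf (cA i)); exact: clx.
Qed.

Lemma bigcap_boolE (T : Type) (C : bool -> set T) :
  \bigcap_(b in [set: bool]) C b = C true `&` C false.
Proof. by apply/seteqP; split=> [x Cx | x [Ct Cf] [] _] //; split; exact: Cx. Qed.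

Section ClusterValues.
Variables (X Y : topologicalType) (S : set X) (f : X -> Y).

Definition cluster_value (x : X) (y : Y) : Prop :=
  forall V, nbhs x V -> closure (f @` (V `&` S)) y.

Lemma cluster_value_self x : S x -> cluster_value x (f x).
Proof.
move=> Sx V /nbhs_singleton Vx; apply: subset_closure; exists x => //.
Qed.

Lemma cluster_value_closure_preimage x y U :
  cluster_value x y -> open U -> U y -> closure (S `&` f @^-1` U) x.
Proof.
move=> xy oU Uy B /xy /(_ U (open_nbhs_nbhs (conj oU Uy))).
by move=> [_ [[s [Bs Ss] <-] Ufs]]; exists s.
Qed.

Lemma cluster_value_avoid x y V U :
  open V -> V x -> open U -> (forall s, V s -> S s -> ~ U (f s)) ->
  cluster_value x y -> ~ U y.
Proof.
move=> oV Vx oU VU xy Uy.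
have [s [[Ss Ufs] Vs]] := cluster_value_closure_preimage xy oU Uy
  (open_nbhs_nbhs (conj oV Vx)).
exact: VU Vs Ss Ufs.
Qed.

Hypothesis closure_preimage_bigcap0 : forall (I : Type) (A : I -> set Y),
  (forall i, closed (A i)) ->
  \bigcap_(i in [set: I]) A i = set0 ->
  \bigcap_(i in [set: I]) closure (S `&` f @^-1` A i) = set0.

Lemma closure_preimage_disjoint A B :
  closed A -> closed B -> A `&` B = set0 ->
  closure (S `&` f @^-1` A) `&` closure (S `&` f @^-1` B) = set0.
Proof.
move=> cA cB AB0.
have := @closure_preimage_bigcap0 bool (fun b => if b then A else B).
by rewrite !bigcap_boolE; apply=> // -[].
Qed.

Lemma cluster_value_exists x : dense S -> exists y, cluster_value x y.
Proof.
move=> dS; apply: contrapT => nxy.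
pose N := {V : set X | nbhs x V}.
pose C (V : N) := closure (f @` (sval V `&` S)).
have C0 : \bigcap_(V in [set: N]) C V = set0.
  apply/seteqP; split=> // y Cy; apply: nxy.
  by exists y => V xV; exact: (Cy (exist _ V xV)).
have := closure_preimage_bigcap0 (fun V => @closed_closure _ _) C0.
apply/eqP/set0P; exists x => -[V xV] _ B xB.
have [s [Ss [Vs Bs]]] := dense_closure dS (filterI xV xB).
by exists s; split=> //; split=> //; apply: subset_closure; exists s.
Qed.

Lemma cluster_value_separated x y U V :
  open U -> U y -> closure U `&` closure V = set0 -> cluster_value x y ->
  exists2 N, nbhs x N & forall s, N s -> S s -> ~ V (f s).
Proof.
move=> oU Uy UV0 xy.
have clU : closure (S `&` f @^-1` closure U) x.
  apply: closureS (cluster_value_closure_preimage xy oU Uy) => s [Ss Ufs].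
  by split=> //; exact: subset_closure.
have nclV : ~ closure (S `&` f @^-1` closure V) x.
  move=> clV; have : (closure (S `&` f @^-1` closure U) `&`
                     closure (S `&` f @^-1` closure V)) x by split.
  by rewrite closure_preimage_disjoint //; exact: closed_closure.
have [N xN SNV0] : exists2 N, nbhs x N &
    ~ ((S `&` f @^-1` closure V) `&` N !=set0).
  apply: contrapT => noN; apply: nclV => B xB.
  by apply: contrapT => SB0; apply: noN; exists B.
exists N => // s Ns Ss Vfs; apply: SNV0; exists s; split=> //; split=> //.
exact: subset_closure.
Qed.

Lemma continuous_cluster_selection (g : X -> Y) :
  closure_regular Y -> (forall x, cluster_value x (g x)) -> continuous g.
Proof.
move=> regY xg; apply/continuousP => O oO; rewrite openE => x Ogx.
have [U [V [oU Ugx oV OV UV0]]] :=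
  regY (g x) (~` O) (open_closedC oO) (fun nOgx => nOgx Ogx).
have [N xN NV] := cluster_value_separated oU Ugx UV0 (xg x).
apply: filterS (nbhs_interior xN) => z Nz; apply: contrapT => nOgz.
apply: (cluster_value_avoid (@open_interior _ N) Nz oV _ (xg z) (OV _ nOgz)).
by move=> s /interior_subset; exact: NV.
Qed.

End ClusterValues.

Theorem theorem3p7 (W : pos_ordinal) (X Y : topologicalType)
  (S : set X) (f : X -> Y) :
  regular_U W Y -> dense S -> {within S, continuous f} ->
  ((exists g : X -> Y, continuous g /\ forall x, S x -> g x = f x) <->
   (forall (I : Type) (A : I -> set Y),
      (forall i, closed (A i)) ->
      \bigcap_(i in [set: I]) A i = set0 ->
      \bigcap_(i in [set: I]) closure (S `&` f @^-1` A i) = set0)).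
Proof.
move=> /regular_U_closure_regular regY dS _; split.
  by move=> [g [cg gf]] I A; exact: extension_bigcap_closure_preimage0.
move=> clf0.
have xg x : exists y, cluster_value S f x y /\ (S x -> y = f x).
  have [Sx|nSx] := pselect (S x).
    by exists (f x); split=> //; exact: cluster_value_self.
  by have [y xy] := cluster_value_exists clf0 x dS; exists y.
have [g gP] := choice xg.
exists g; split; last by move=> x /(proj2 (gP x)).
by apply: (continuous_cluster_selection clf0 regY) => x; exact: (gP x).1.
Qed.
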